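(* Let $G=(V,E)$ be a graph. If $|V|=1$, the single vertex of $G$ is a forced codeword. If $|V|\ge 2$, then a vertex $u\in V$ is a forced codeword if and only if there exists a vertex $v\in V$ with $v\ne u$ and $N(u)\subseteq N[v]$.
   Context: All graphs are finite, simple and undirected (not necessarily connected). For $u\in V$, $N(u)$ is the set of neighbours of $u$ and $N[u]=N(u)\cup\{u\}$. A code is a non-empty subset $C\subseteq V$. For $u\in V$, $I(C;u)=N[u]\cap C$. A code $C$ is self-locating-dominating if for every $u\in V\setminus C$ we have $I(C;u)\neq\emptyset$ and $\bigcap_{c\in I(C;u)}N[c]=\{u\}$. A vertex $u$ is a forced codeword if $u$ belongs to every self-locating-dominating code of $G$. *)

From mathcomp Require Import all_boot.
Set Implicit Arguments. Unset Strict Implicit. Unset Printing Implicit Defensive.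

Definition simple_graph (T : finType) (e : rel T) : Prop :=
  symmetric e /\ irreflexive e.

Definition nbh (T : finType) (e : rel T) (u : T) : {set T} := [set v | e u v].
Definition cnbh (T : finType) (e : rel T) (u : T) : {set T} := u |: nbh e u.

Definition Iset (T : finType) (e : rel T) (C : {set T}) (u : T) : {set T} :=
  cnbh e u :&: C.

Definition is_SLD (T : finType) (e : rel T) (C : {set T}) : Prop :=
  C != set0 /\
  forall u, u \notin C ->
    Iset e C u != set0 /\ \bigcap_(c in Iset e C u) cnbh e c = [set u].

Definition forced_codeword (T : finType) (e : rel T) (u : T) : Prop :=
  forall C : {set T}, is_SLD e C -> u \in C.

From mathcomp Require Import all_boot.

(* If [N(u) ⊆ N[v]] for some [v != u] and [u ∉ C], then [v] lies in [N[c]]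
   for every [c ∈ I(C;u) = N(u) ∩ C], so [v] spoils the intersection that
   must equal [{u}]. Conversely, if no such [v] exists, [V \ {u}] is a
   self-locating-dominating code: then [I(V \ {u}; u) = N(u)], and the
   intersection of the [N[c]] over [c ∈ N(u)] contains [u] and no other
   vertex. *)

Lemma exists_neq {T : finType} : 1 < #|T| -> forall u : T, exists x, x != u.
Proof.
move=> + u.
rewrite -cardsT (cardsD1 u) in_setT add1n ltnS card_gt0 => /set0Pn[x].
by rewrite !inE => /andP[xu _]; exists x.
Qed.

Section SelfLocatingDominating.

Variables (T : finType) (e : rel T).
Hypothesis e_sym : symmetric e.

Lemma in_cnbh (c x : T) : (x \in cnbh e c) = (x == c) || e c x.
Proof. by rewrite /cnbh /nbh !inE. Qed.

Lemma mem_bigcap_cnbh (u : T) (A : {set T}) :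
  A \subset nbh e u -> u \in \bigcap_(c in A) cnbh e c.
Proof.
move=> /subsetP sAN; apply/bigcapP => c /sAN.
by rewrite inE in_cnbh e_sym => ->; rewrite orbT.
Qed.

Lemma bigcap_cnbhE (u x : T) : x != u ->
  (x \in \bigcap_(c in nbh e u) cnbh e c) = (nbh e u \subset cnbh e x).
Proof.
move=> xu; apply/bigcapP/subsetP => [sx c cN | sN c cN].
  by have := sx c cN; rewrite !in_cnbh e_sym eq_sym.
by have := sN c cN; rewrite !in_cnbh e_sym eq_sym.
Qed.

Lemma forced_codeword_nbh_sub (u v : T) :
  v != u -> nbh e u \subset cnbh e v -> forced_codeword e u.
Proof.
move=> vu sNuv C [_ sldC]; apply/negPn/negP => uC.
have [_ capE] := sldC u uC.
suff : v \in \bigcap_(c in Iset e C u) cnbh e c by rewrite capE inE (negbTE vu).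
apply/bigcapP => c; rewrite inE in_cnbh => /andP[/orP[/eqP cu | euc] cC].
  by move: cC; rewrite cu (negbTE uC).
have /(subsetP sNuv) : c \in nbh e u by rewrite inE.
by rewrite !in_cnbh e_sym eq_sym.
Qed.

Hypothesis e_irr : irreflexive e.

Lemma Iset_setC1 (u : T) : Iset e [set~ u] u = nbh e u.
Proof.
apply/setP => x; rewrite inE in_cnbh !inE.
by case: (eqVneq x u) => [->|]; rewrite ?e_irr ?andbT.
Qed.

Lemma is_SLD_setC1 (u : T) : 1 < #|T| ->
  (forall v, v != u -> ~~ (nbh e u \subset cnbh e v)) -> is_SLD e [set~ u].
Proof.
move=> T_gt1 noDom; have [x xu] := exists_neq T_gt1 u.
split; first by apply/set0Pn; exists x; rewrite !inE.
move=> w; rewrite !inE negbK => /eqP->; rewrite Iset_setC1; split.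
  by apply/negP => /eqP N0; have := noDom x xu; rewrite N0 sub0set.
apply/setP => y; rewrite inE; case: (eqVneq y u) => [->|yu].
  exact: mem_bigcap_cnbh.
by rewrite bigcap_cnbhE // (negbTE (noDom y yu)).
Qed.

Lemma forced_codewordP (u : T) : 1 < #|T| ->
  forced_codeword e u <-> exists v, v != u /\ nbh e u \subset cnbh e v.
Proof.
move=> T_gt1; split => [forced_u | [v [vu sNuv]]]; last first.
  exact: forced_codeword_nbh_sub sNuv.
suff /exists_inP[v vu sNuv] : [exists (v | v != u), nbh e u \subset cnbh e v].
  by exists v.
apply: contraT => /exists_inPn noDom.
by have := forced_u _ (@is_SLD_setC1 u T_gt1 noDom); rewrite !inE eqxx.
Qed.

End SelfLocatingDominating.

Lemma forced_codeword_card1 (T : finType) (e : rel T) (u : T) :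
  #|T| = 1 -> forced_codeword e u.
Proof.
move=> T1 C [/set0Pn[x xC] _].
have /card_le1_eqP all_eq : #|T| <= 1 by rewrite T1.
by have -> : u = x by apply: all_eq.
Qed.

Theorem mainTheorem3 (T : finType) (e : rel T) (He : simple_graph e) :
  (#|T| = 1 -> forall u : T, forced_codeword e u) /\
  (2 <= #|T| -> forall u : T,
      forced_codeword e u <-> exists v : T, v != u /\ nbh e u \subset cnbh e v).
Proof.
have [e_sym e_irr] := He.
split => [T1 u | T_gt1 u]; first exact: forced_codeword_card1.
exact: forced_codewordP.
Qed.
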